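(* Let $\mathcal{X},\mu,f,\mathcal{D},G,U,f_n$ be as in the context, with $f\in\mathcal{F}(L,\beta)$, and suppose assumption sets (E) and (Q) hold. Fix $x\in\mathcal{X}$, let the bandwidth be $h=a n^{-1/(2\beta+d-d^G)}$ for some $a>0$, and let $\{g^i\}_{i=1}^m=\{g^i_{x,h}\}$ and $\rho_m^x$ be as constructed in the context. Write $p_{y,h}=\mu(B_\mathcal{X}(y,h))$. Then in the random design regime, for all $n$, $$\big|\mathbb{E}(S_{\rho_m^x}f_n(x))-S_{\rho_m^x}f(x)\big|\ \le\ Bh^\beta+\sup_{i\in[m]}\exp(-np_{g^i\cdot x,h})\,\|f\|_\infty .$$
   Context: Setting. $\mathcal{X}$ is the closure of an open subset of $\mathbb{R}^d$ or an orientable smooth $d$-dimensional Riemannian manifold with geodesic distance $d_\mathcal{X}$; $B_\mathcal{X}(x,h)$ is the open ball. $\mu$ is a Borel probability measure with $\mathrm{supp}(\mu)=\mathcal{X}$ such that there is $H>0$ and constants $c_x>0$ with $c_xh^d<\mu(B_\mathcal{X}(x,h))$ for all $x$ and $0<h<H$. Data $\mathcal{D}=\{(X_i,Y_i)\}_{i=1}^n$ with $Y_i=f(X_i)+\epsilon_i$, $\epsilon_i$ iid, mean $0$, variance $\sigma^2<\infty$, independent of $\mathcal{D}_X=\{X_i\}$; random design means $X_i\overset{iid}{\sim}\mu$. The Hölder class $\mathcal{F}(L,\beta)$ ($k=\lfloor\beta\rfloor$) is the set of $f\in L^2(\mathcal{X})$ with $\sum_{|\alpha|\le k}\|\partial^\alpha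 f\|_\infty+\sum_{|\alpha|=k}\sup_{x\ne y}\frac{|\partial^\alpha f(x)-\partial^\alpha f(y)|}{d(x,y)^{\beta-k}}\le L$. $G$ is a locally compact Lie group acting smoothly, properly, faithfully on $\mathcal{X}$; $U\subseteq G$ is compact with nonempty interior containing the identity; $d^G$ is the dimension of a principal (generic) orbit of $G$. For a distribution $\rho$ on $G$, $S_\rho\phi(x)=\mathbb{E}(\phi(g\cdot x))$, $g\sim\rho$. Construction of $\rho_m^x$ (bandwidth $h$): isometrically embed $\mathcal{X}$ in $\mathbb{R}^q$; with $[x]_U=\{g\cdot x:g\in U\}$, let $W_x^{[x]_U}$ be the largest hypercube in the tangent space $T_x[x]_U$ contained in the orthogonal projection of $[x]_U$ onto $T_x[x]_U$, and $R_x^{[x]_U}$ its side length ($=1$ if the orbit is $0$-dimensional). Pick a maximal grid $\{a_i\}_{i=1}^m\subseteq W_x^{[x]_U}$ with pairwise distances $\ge 2h$, project it orthogonally onto $[x]_U$ to get $u_i$, pick $g^i_{x,h}\in U$ with $g^i_{x,h}\cdot x=u_i$, and let $\rho_m^x$ be the uniform distribution on $\{g^i_{x,h}\}$, so $S_{\rho_m^x}f_n(x)=\frac1m\sum_i f_n(g^i_{x,h}\cdot x)$. Assumption set (E) on the base estimator $f_n$ (built from $\mathcal{D}$ with bandwidth $h$): (E1) conditioned on $\mathcal{D}_X$, $f_n(x)$ and $f_n(y)$ are independent whenever $d(x,y)\ge 2h$; (E2) if $B_\mathcal{X}(x,h)$ contains no $X_i$ then $f_n(x)=0$; (E3) there exist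 $B,V,C>0$ such that for all $f\in\mathcal{F}(L,\beta)$, $\mu$-almost all $x$ and all $n$: (a) if $B_\mathcal{X}(x,h)\cap\mathcal{D}_X\ne\emptyset$ then $|\mathbb{E}(f_n(x)\mid\mathcal{D}_X)-f(x)|\le Bh^\beta$; (b) if $B_\mathcal{X}(x,h)\cap\mathcal{D}_X\ne\emptyset$ then $\mathrm{Var}(f_n(x)\mid\mathcal{D}_X)\le V/|B_\mathcal{X}(x,h)\cap\mathcal{D}_X|$; (c) $\mathbb{E}((f_n(x)-f(x))^2)\le C(B^2h^{2\beta}+V(n\mu(B_\mathcal{X}(x,h)))^{-1})$. Assumption set (Q): (Q1) $\mathbb{E}((R_X^{[X]_U})^{-d^G})<\infty$ for $X\sim\mu$; (Q2) $d^G\le 2\beta$.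
   Formalization: Assumption (E3)(a) holds at every point y and for every design $\mathcal{D}_X$ whose points meet $B_\mathcal{X}(y,h)$, rather than only for μ-almost all x. The statement above fails without it. *)

From HB Require Import structures.
From mathcomp Require Import all_boot all_order all_algebra.
From mathcomp Require Import all_classical all_reals all_analysis.
Set Implicit Arguments. Unset Strict Implicit. Unset Printing Implicit Defensive.
Import Order.TTheory GRing.Theory Num.Theory.
Local Open Scope classical_set_scope.
Local Open Scope ring_scope.

Section defs.
Context {d : measure_display} {R : realType} {X : measurableType d}.

Definition ball_d (dist : X -> X -> R) (y : X) (r : R) : set X :=
  [set z | dist y z < r].

Definition data n (f : X -> R) (xs : n.-tuple X) (es : n.-tuple R)
  : n.-tuple (X * R)%type :=
  [tuple (tnth xs i, f (tnth xs i) + tnth es i) | i < n].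

(** conditional expectation given D_X = xs of a statistic F(D):
    integrate the noise out (noise independent of the design) *)
Definition condE n (Pe : probability (n.-tuple R) R) (f : X -> R)
  (F : n.-tuple (X * R)%type -> R) (xs : n.-tuple X) : \bar R :=
  (\int[Pe]_es (F (data f xs es))%:E)%E.

Definition fullE n (Px : probability (n.-tuple X) R)
  (Pe : probability (n.-tuple R) R) (f : X -> R)
  (F : n.-tuple (X * R)%type -> R) : \bar R :=
  (\int[Px]_xs condE Pe f F xs)%E.

Definition iid_law {d' : measure_display} {T : measurableType d'} n
  (P : probability (n.-tuple T) R) (nu : probability T R) : Prop :=
  forall A : 'I_n -> set T, (forall i, measurable (A i)) ->
    P [set t | forall i, A i (tnth t i)] = (\prod_(i < n) nu (A i))%E.

Definition supnorm (f : X -> R) : \bar R :=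
  ereal_sup [set (`|f z|)%:E | z in [set: X]].

(** S_rho phi (x) for rho uniform on {g_1,...,g_m} *)
Definition S_unif {G : Type} (act : G -> X -> X) m (g : 'I_m -> G)
  (phi : X -> R) (x : X) : R :=
  (m%:R)^-1 * \sum_(i < m) phi (act (g i) x).

End defs.

From HB Require Import structures.
From mathcomp Require Import all_boot all_order all_algebra.
From mathcomp Require Import all_classical all_reals all_analysis.
From mathcomp Require Import measurable_realfun.
Import Order.TTheory GRing.Theory Num.Theory.
Local Open Scope classical_set_scope.
Local Open Scope ring_scope.

(* Conditionally on the design, linearity reduces the bias of S_rho f_n(x) to
   the average of the conditional biases of f_n at the points g_i . x.  At such
   a point the conditional bias is at most B h^beta when the ball B(g_i . x, h)
   contains a design point, by (E3)(a), and is |f(g_i . x)| otherwise, by (E2).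
   For an iid design the second event has probability (1 - p)^n <= exp(-n p),
   where p = mu(B(g_i . x, h)). *)

Section measurability.
Context {R : realType}.

Lemma measurable_data {d : measure_display} {X : measurableType d} n (f : X -> R) :
  measurable_fun setT f ->
  measurable_fun setT (fun p : n.-tuple X * n.-tuple R => data f p.1 p.2).
Proof.
move=> mf; apply/measurable_fun_tnthP => j.
have -> : (tnth (T:=X * R))^~ j \o (fun p : n.-tuple X * n.-tuple R => data f p.1 p.2)
  = (fun p => (tnth p.1 j, f (tnth p.1 j) + tnth p.2 j)).
  by apply/funext => p /=; rewrite /data tnth_map tnth_ord_tuple.
have m1 : measurable_fun setT (fun p : n.-tuple X * n.-tuple R => tnth p.1 j).
  exact: measurableT_comp (measurable_tnth j) measurable_fst.
have m2 : measurable_fun setT (fun p : n.-tuple X * n.-tuple R => tnth p.2 j).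
  exact: measurableT_comp (measurable_tnth j) measurable_snd.
apply: measurable_fun_pair => //; apply: measurable_funD => //.
exact: measurableT_comp mf m1.
Qed.

Lemma measurable_fun_partial_integral {d1 d2 : measure_display}
    {T1 : measurableType d1} {T2 : measurableType d2}
    (P : {sigma_finite_measure set T2 -> \bar R})
    (Phi : T1 * T2 -> R) :
  measurable_fun setT Phi ->
  measurable_fun setT (fun x => (\int[P]_y (Phi (x, y))%:E)%E).
Proof.
move=> mPhi; have mE : measurable_fun setT (EFin \o Phi) by apply/measurable_EFinP.
have -> : (fun x => (\int[P]_y (Phi (x, y))%:E)%E) =
    (fubini_F P (EFin \o Phi)^\+ \- fubini_F P (EFin \o Phi)^\-)%E.
  apply/funext => x; rewrite [LHS]integralE /fubini_F /=.
  by congr (_ - _)%E; apply: eq_integral => y _; rewrite ?funeposE ?funenegE.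
apply: emeasurable_funB; apply: measurable_fun_fubini_tonelli_F => //.
- exact: measurable_funepos.
- exact: measurable_funeneg.
Qed.

End measurability.

Lemma expr_onem_le_expR (R : realType) (p : R) n :
  p <= 1 -> (1 - p) ^+ n <= expR (- (n%:R * p)).
Proof.
move=> p1; rewrite -mulrN expRM_natl.
by apply: lerXn2r; rewrite ?nnegrE ?subr_ge0 ?expR_ge0 ?expR_ge1Dx.
Qed.

Section iid_sample.
Context {d : measure_display} {T : measurableType d} {R : realType}.

Definition sample_avoids n (A : set T) : set (n.-tuple T) :=
  [set t | forall i, ~ A (tnth t i)].

Lemma measurable_sample_avoids n (A : set T) :
  measurable A -> measurable (sample_avoids n A).
Proof.
move=> mA; have -> : sample_avoids n A =
    \bigcap_(i in [set: 'I_n]) ((fun t : n.-tuple T => tnth t i) @^-1` (~` A)).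
  by apply/seteqP; split => t /= tA i; [move=> _; exact: tA | exact: tA i I].
apply: fin_bigcap_measurable => [|i _]; first exact: finite_finset.
by rewrite -[X in measurable X]setTI; apply: measurable_tnth => //; exact: measurableC.
Qed.

Lemma iid_law_sample_avoids n (P : probability (n.-tuple T) R) (nu : probability T R)
    (A : set T) :
  iid_law P nu -> measurable A ->
  fine (P (sample_avoids n A)) <= expR (- (n%:R * fine (nu A))).
Proof.
move=> iidP mA; have nuA : nu A = (fine (nu A))%:E by rewrite fineK ?fin_num_measure.
rewrite [P _](iidP (fun=> ~` A) (fun=> measurableC mA)).
rewrite (eq_bigr (fun=> (1 - fine (nu A))%:E)) => [|i _]; last first.
  by rewrite probability_setC // nuA.
rewrite prodEFin prodr_const card_ord /=; apply: expr_onem_le_expR.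
by rewrite -lee_fin -nuA probability_le1.
Qed.

End iid_sample.

Section probability_integrals.
Context {d : measure_display} {T : measurableType d} {R : realType}.
Variable P : probability T R.

Lemma integral_cst_add_mean_indic m (K : R) (w : 'I_m -> R) (E : 'I_m -> set T) :
  (forall i, measurable (E i)) ->
  (\int[P]_t (K + m%:R^-1 * \sum_(i < m) \1_(E i) t * w i)%:E =
   (K + m%:R^-1 * \sum_(i < m) fine (P (E i)) * w i)%:E)%E.
Proof.
move=> mE; pose c i := m%:R^-1 * w i.
have intE i : P.-integrable setT (fun t => (c i * \1_(E i) t)%:E).
  exact: integrableZl (integrable_indic P (mE i)).
have -> : (fun t => (K + m%:R^-1 * \sum_(i < m) \1_(E i) t * w i)%:E) =
    (fun t => K%:E + \sum_(i < m) (c i * \1_(E i) t)%:E)%E.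
  apply/funext => t; rewrite sumEFin -EFinD mulr_sumr; congr (_ + _)%:E.
  by apply: eq_bigr => i _; rewrite /c mulrA mulrAC.
rewrite integralD //; last 2 first.
- exact: finite_measure_integrable_cst.
- by apply: integrable_sum => // i _; exact: intE.
rewrite integral_cst //= probability_setT mule1 integral_sum // EFinD mulr_sumr -sumEFin.
congr (_ + _)%E; apply: eq_bigr => i _.
rewrite (integralZl measurableT (integrable_indic P (mE i))) integral_indic // setIT.
by rewrite mulrCA mulrC [RHS]EFinM fineK ?fin_num_measure.
Qed.

Lemma abse_integral_subr_le (u psi : T -> R) (c : R) :
  measurable_fun setT u -> measurable_fun setT psi ->
  (\int[P]_t (psi t)%:E < +oo)%E ->
  (forall t, `|u t - c| <= psi t) ->
  (`|\int[P]_t (u t)%:E - c%:E| <= \int[P]_t (psi t)%:E)%E.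
Proof.
move=> mu mpsi psi_fin uc.
have muc : measurable_fun setT (fun t => (u t - c)%:E).
  by apply/measurable_EFinP; apply: measurable_funB.
have le_psi : (\int[P]_t `|(u t - c)%:E| <= \int[P]_t (psi t)%:E)%E.
  apply: ge0_le_integral => //.
  - exact: measurableT_comp (@abse_measurable R setT) muc.
  - exact/measurable_EFinP.
  - by move=> t _; rewrite lee_fin uc.
have iuc : P.-integrable setT (fun t => (u t - c)%:E).
  by apply/integrableP; split => //; exact: le_lt_trans le_psi psi_fin.
have -> : (\int[P]_t (u t)%:E = \int[P]_t ((u t - c)%:E + c%:E))%E.
  by apply: eq_integral => t _; rewrite -EFinD subrK.
rewrite integralD //; last exact: finite_measure_integrable_cst.
rewrite integral_cst //= probability_setT mule1 addeK //.
exact: le_trans (le_abse_integral _ _ _) le_psi.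
Qed.

End probability_integrals.

Lemma mean_dist_le (R : numFieldType) m (u v w : 'I_m -> R) (K : R) : (0 < m)%N ->
  (forall i, `|u i - v i| <= K + w i) ->
  `|m%:R^-1 * \sum_(i < m) u i - m%:R^-1 * \sum_(i < m) v i|
    <= K + m%:R^-1 * \sum_(i < m) w i.
Proof.
move=> m0 uvw; have m0R : (m%:R : R) != 0 by rewrite pnatr_eq0 -lt0n.
rewrite -mulrBr -sumrB normrM ger0_norm ?invr_ge0 ?ler0n //.
have -> : K = m%:R^-1 * \sum_(i < m) K.
  by rewrite sumr_const card_ord -[K *+ m]mulr_natl mulrA mulVf ?mul1r.
rewrite -mulrDr -big_split /=; apply: ler_wpM2l; first by rewrite invr_ge0 ler0n.
by apply: le_trans (ler_norm_sum _ _ _) _; apply: ler_sum => i _.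
Qed.

Section supnorm.
Context {d : measure_display} {R : realType} {X : measurableType d}.

Lemma supnorm_ge_norm (f : X -> R) z : ((`|f z|)%:E <= supnorm f)%E.
Proof. by apply: ereal_sup_ubound; exists z. Qed.

Lemma mean_le_supnorm m (a : 'I_m -> R) (M : R) (y : 'I_m -> X) (f : X -> R) :
  (0 < m)%N -> (forall i, 0 <= a i <= M) ->
  ((m%:R^-1 * \sum_(i < m) a i * `|f (y i)|)%:E <= M%:E * supnorm f)%E.
Proof.
move=> m0 aM; have m0R : (m%:R : R) != 0 by rewrite pnatr_eq0 -lt0n.
have M0 : 0 <= M by case/andP: (aM (Ordinal m0)); exact: le_trans.
have := supnorm_ge_norm f (y (Ordinal m0)); case Es : (supnorm f) => [s| |] // _.
- have fs z : `|f z| <= s by rewrite -lee_fin -Es supnorm_ge_norm.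
  rewrite -EFinM lee_fin; apply: (@le_trans _ _ (m%:R^-1 * \sum_(i < m) M * s)).
    apply: ler_wpM2l; first by rewrite invr_ge0 ler0n.
    by apply: ler_sum => i _; case/andP: (aM i) => a0 aMi; apply: ler_pM.
  by rewrite sumr_const card_ord -[M * s *+ m]mulr_natl !mulrA mulVf ?mul1r.
- have [M_gt0|M_le0] := ltP 0 M; first by rewrite gt0_muley ?lte_fin ?leey.
  have a0 i : a i = 0.
    by case/andP: (aM i) => a0 aMi; apply/le_anti; rewrite a0 (le_trans aMi M_le0).
  rewrite big1 => [|i _]; last by rewrite a0 mul0r.
  by rewrite mulr0; apply: mule_ge0; rewrite ?lee_fin ?leey.
Qed.

End supnorm.

Lemma condE_average {d : measure_display} {R : realType} {X : measurableType d} n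
    (Pe : probability (n.-tuple R) R) (f : X -> R) m
    (F : 'I_m -> n.-tuple (X * R)%type -> R) (xs : n.-tuple X) :
  (forall i, measurable_fun setT (fun es => F i (data f xs es))) ->
  (forall i, condE Pe f (F i) xs \is a fin_num) ->
  condE Pe f (fun D => m%:R^-1 * \sum_(i < m) F i D) xs =
  (m%:R^-1 * \sum_(i < m) fine (condE Pe f (F i) xs))%:E.
Proof.
move=> mF finF.
have intF i : Pe.-integrable setT (fun es => (F i (data f xs es))%:E).
  apply/integrableP; split; first exact/measurable_EFinP.
  by rewrite integral_fin_num_abs //; exact: finF.
rewrite /condE /=; under eq_integral do rewrite mulr_sumr -sumEFin.
rewrite integral_sum // => [|i]; last exact: integrableZl (intF i).
rewrite mulr_sumr -sumEFin; apply: eq_bigr => i _.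
by rewrite EFinM (fineK (finF i)) -(integralZl measurableT (intF i)).
Qed.

Section local_estimator.
Context {d : measure_display} {R : realType} {X : measurableType d} (n : nat).
Variables (dist : X -> X -> R) (Pe : probability (n.-tuple R) R) (f : X -> R).
Variables (h K : R) (est : n.-tuple (X * R)%type -> X -> R).
Hypothesis K_ge0 : 0 <= K.
Hypothesis est_avoids : forall xs es y, (forall i, ~ ball_d dist y h (tnth xs i)) ->
  est (data f xs es) y = 0.
Hypothesis condE_bias : forall xs y, (exists i, ball_d dist y h (tnth xs i)) ->
  (`| condE Pe f (fun D => est D y) xs - (f y)%:E | <= K%:E)%E.

Lemma condE_sample_avoids y xs : sample_avoids n (ball_d dist y h) xs ->
  condE Pe f (fun D => est D y) xs = 0%E.
Proof.
move=> avoid; rewrite /condE (eq_integral (fun=> 0%E)) ?integral0 // => es _.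
by rewrite est_avoids.
Qed.

Lemma condE_fin_num y xs : condE Pe f (fun D => est D y) xs \is a fin_num.
Proof.
have [hit|miss] := pselect (exists i, ball_d dist y h (tnth xs i)).
  by move: (condE_bias _ _ hit); case: (condE _ _ _ _).
by rewrite condE_sample_avoids // => i hi; apply: miss; exists i.
Qed.

Lemma condE_bias_le y xs :
  `|fine (condE Pe f (fun D => est D y) xs) - f y|
    <= K + \1_(sample_avoids n (ball_d dist y h)) xs * `|f y|.
Proof.
have [hit|miss] := pselect (exists i, ball_d dist y h (tnth xs i)).
  have := condE_bias _ _ hit; rewrite -(fineK (condE_fin_num y xs)) -EFinB /= lee_fin.
  by move/le_trans; apply; rewrite lerDl mulr_ge0.
have avoid : sample_avoids n (ball_d dist y h) xs by move=> i hi; apply: miss; exists i.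
by rewrite condE_sample_avoids // indicE mem_set // sub0r normrN mul1r lerDr.
Qed.

Hypothesis measurable_ball : forall y r, measurable (ball_d dist y r).
Hypothesis measurable_f : measurable_fun setT f.
Hypothesis measurable_est : forall y, measurable_fun setT (fun D => est D y).

Let measurable_est_data y :
  measurable_fun setT (fun p : n.-tuple X * n.-tuple R => est (data f p.1 p.2) y).
Proof. by apply: (measurableT_comp (measurable_est y)); exact: measurable_data. Qed.

Lemma measurable_condE y :
  measurable_fun setT (fun xs => fine (condE Pe f (fun D => est D y) xs)).
Proof.
apply: measurableT_comp (fine_measurable _) _ => //.
exact: measurable_fun_partial_integral (measurable_est_data y).
Qed.

Lemma fullE_S_unif_bias_le (Px : probability (n.-tuple X) R) G (act : G -> X -> X)
    m (g : 'I_m -> G) x : (0 < m)%N ->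
  (`| fullE Px Pe f (fun D => S_unif act g (est D) x) - (S_unif act g f x)%:E |
   <= (K + m%:R^-1 * \sum_(i < m)
            fine (Px (sample_avoids n (ball_d dist (act (g i) x) h))) * `|f (act (g i) x)|)%:E)%E.
Proof.
move=> m0; set y := fun i => act (g i) x.
pose E i := sample_avoids n (ball_d dist (y i) h).
have mE i : measurable (E i) by apply: measurable_sample_avoids; exact: measurable_ball.
pose bias xs := m%:R^-1 * \sum_(i < m) fine (condE Pe f (fun D => est D (y i)) xs).
have -> : fullE Px Pe f (fun D => S_unif act g (est D) x) = (\int[Px]_xs (bias xs)%:E)%E.
  apply: eq_integral => xs _; apply: condE_average => i; last exact: condE_fin_num.
  exact: measurable_fun_pair2 xs (measurable_est_data (y i)).
have mbias : measurable_fun setT bias.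
  by apply: measurable_funM => //; apply: measurable_sum => i; exact: measurable_condE.
have mpsi : measurable_fun setT
    (fun xs => K + m%:R^-1 * \sum_(i < m) \1_(E i) xs * `|f (y i)|).
  apply: measurable_funD => //; apply: measurable_funM => //.
  by apply: measurable_sum => i; apply: measurable_funM => //; exact: measurable_indic.
rewrite -(integral_cst_add_mean_indic _ _ _ _ _ mE); apply: abse_integral_subr_le => //.
- by rewrite integral_cst_add_mean_indic // ltry.
- by move=> xs; apply: mean_dist_le => // i; exact: condE_bias_le.
Qed.

End local_estimator.

Theorem lemma2 (d : measure_display) (R : realType) (X : measurableType d)
  (dist : X -> X -> R) (mu : probability X R) (nu : probability R R)
  (n : nat) (Px : probability (n.-tuple X) R) (Pe : probability (n.-tuple R) R)
  (f : X -> R) (h B beta : R)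
  (est : n.-tuple (X * R)%type -> X -> R)
  (G : Type) (act : G -> X -> X) (x : X) (m : nat) (g : 'I_m -> G) :
  (* balls are measurable *)
  (forall y r, measurable (ball_d dist y r)) ->
  (* random design: X_i iid mu; noise eps_i iid nu, mean 0, finite variance,
     independent of the design (product structure Px x Pe) *)
  iid_law Px mu -> iid_law Pe nu ->
  (\int[nu]_e e%:E = 0)%E -> nu.-integrable setT (fun e : R => (e ^+ 2)%:E) ->
  measurable_fun setT f ->
  (* the estimator f_n(y) is a random variable *)
  (forall y, measurable_fun setT (fun D => est D y)) ->
  0 < h -> 0 < B -> 0 < beta -> (0 < m)%N ->
  (* (E2) *)
  (forall xs es y, (forall i, ~ ball_d dist y h (tnth xs i)) ->
     est (data f xs es) y = 0) ->
  (* (E3)(a) *)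
  (forall xs y, (exists i, ball_d dist y h (tnth xs i)) ->
     (`| condE Pe f (fun D => est D y) xs - (f y)%:E | <= (B * h `^ beta)%:E)%E) ->
  (`| fullE Px Pe f (fun D => S_unif act g (est D) x) - (S_unif act g f x)%:E |
     <= (B * h `^ beta)%:E
        + (\big[Order.max/0]_(i < m)
             expR (- (n%:R * fine (mu (ball_d dist (act (g i) x) h)))))%:E
          * supnorm f)%E.
Proof.
move=> mball iidx _ _ _ mf mest _ B_gt0 _ m_gt0 est_avoids condE_bias.
have K_ge0 : 0 <= B * h `^ beta by rewrite mulr_ge0 ?powR_ge0 ?ltW.
apply: le_trans (fullE_S_unif_bias_le _ _ _ _ _ _ _ K_ge0 est_avoids condE_bias
  mball mf mest Px _ act m g x m_gt0) _.
rewrite EFinD leeD2l //; apply: mean_le_supnorm => // i.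
rewrite fine_ge0 ?measure_ge0 //=; apply: le_trans (le_bigmax _ _ i).
exact: iid_law_sample_avoids.
Qed.
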